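(* For every positive integer $T$ divisible by $4$, \[\sum_{t=1}^{T/4}\big(T-4(t-1)\big)\binom{T+1}{2t-1}=2^{T-1}+\frac T2\binom{T}{T/2}.\] *)

From mathcomp Require Import all_boot.

From mathcomp Require Import all_boot.
From mathcomp Require Import zify.

(* Write T = n = 4m. By the absorption identities the weight n - 4s of C(n+1, 2s+1) splits as
   (n+1) (C(n, 2s+1) - C(n, 2s)) + C(n+1, 2s+1). Summed over s < m, the first part is an
   alternating partial sum, equal to (n+1) C(n-1, 2m-1) = (n+1)/2 C(n, 2m); the second is the
   sum of the C(n, j) over j < 2m, which by symmetry is (2^n - C(n, 2m))/2. *)

Lemma sum_bin n : \sum_(i < n.+1) 'C(n, i) = 2 ^ n.
Proof. by rewrite -[2]/(1 + 1) expnDn; apply: eq_bigr => i _; rewrite !exp1n !muln1. Qed.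

Lemma sum_bin_lt_half k : 2 * \sum_(j < k) 'C(2 * k, j) + 'C(2 * k, k) = 2 ^ (2 * k).
Proof.
rewrite -sum_bin.
have -> : (2 * k).+1 = k + k.+1 by lia.
rewrite big_split_ord big_ord_recl /= addn0.
have -> : \sum_(i < k) 'C(2 * k, k + bump 0 i) = \sum_(j < k) 'C(2 * k, j).
  rewrite (reindex_inj rev_ord_inj); apply: eq_bigr => i _ /=.
  rewrite -(bin_sub (n := 2 * k) (m := i)); last by have := ltn_ord i; lia.
  congr 'C(_, _); rewrite /bump /=; have := ltn_ord i; lia.
by rewrite addnCA mul2n -addnn addnC.
Qed.

Lemma sum_even_odd (F : nat -> nat) M :
  \sum_(j < 2 * M) F j = \sum_(s < M) (F (2 * s) + F (2 * s).+1).
Proof.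
elim: M => [|M IH]; first by rewrite muln0 !big_ord0.
by rewrite mulnS add2n !big_ord_recr /= IH addnA.
Qed.

Lemma sum_bin_odd_even n M :
  \sum_(s < M.+1) 'C(n.+1, (2 * s).+1)
  = \sum_(s < M.+1) 'C(n.+1, 2 * s) + 'C(n, (2 * M).+1).
Proof.
elim: M => [|M IH]; first by rewrite !big_ord1 muln0 bin0 !bin1.
rewrite big_ord_recr [in RHS]big_ord_recr /= IH mulnS add2n !binS -!addnA.
by congr (_ + _); lia.
Qed.

Lemma bin_central_succ k : 'C((2 * k).+2, k.+1) = 2 * 'C((2 * k).+1, k).
Proof.
have sym : 'C((2 * k).+1, k.+1) = 'C((2 * k).+1, k).
  rewrite -[LHS](bin_sub (n := (2 * k).+1) (m := k.+1)); last lia.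
  congr binomial; lia.
by rewrite binS sym addnn -mul2n.
Qed.

Lemma mul_bin_sub_double n k : 2 * k <= n ->
  (n - 2 * k) * 'C(n.+1, k.+1) + n.+1 * 'C(n, k)
  = n.+1 * 'C(n, k.+1) + 'C(n.+1, k.+1).
Proof.
move=> le2kn.
have down : n.+1 * 'C(n, k.+1) = (n - k) * 'C(n.+1, k.+1) := mul_bin_down n.+1 k.+1.
have diag : n.+1 * 'C(n, k) = k.+1 * 'C(n.+1, k.+1) := mul_bin_diag n.+1 k.
rewrite down diag -[X in _ = _ + X]mul1n -!mulnDl; congr (_ * _); lia.
Qed.

Lemma sum_weighted_odd_bin m : 0 < m ->
  \sum_(s < m) (4 * m - 4 * s) * 'C((4 * m).+1, (2 * s).+1)
  = 2 ^ (4 * m).-1 + 2 * m * 'C(4 * m, 2 * m).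
Proof.
case: m => // p _; set n := 4 * p.+1; set S := \sum_(s < p.+1) _.
set E := \sum_(s < p.+1) 'C(n, 2 * s); set O := \sum_(s < p.+1) 'C(n, (2 * s).+1).
have n_eq : n = (2 * (2 * p).+1).+2 by rewrite /n; lia.
have weights : S + n.+1 * E = n.+1 * O + (O + E).
  rewrite /S /E /O !big_distrr -!big_split /=; apply: eq_bigr => s _.
  rewrite -binS -mul_bin_sub_double; last by have := ltn_ord s; lia.
  congr (_ * _ + _); lia.
have total : 2 * (E + O) + 'C(n, 2 * p.+1) = 2 ^ n.
  have := sum_bin_lt_half (2 * p.+1); rewrite mulnA -/n sum_even_odd => <-.
  by rewrite /E /O -big_split.
have alternating : O = E + 'C((2 * (2 * p).+1).+1, (2 * p).+1).
  by rewrite /O /E n_eq; apply: sum_bin_odd_even.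
have middle : 'C(n, 2 * p.+1) = 2 * 'C((2 * (2 * p).+1).+1, (2 * p).+1).
  by rewrite [2 * p.+1]mulnS n_eq; apply: bin_central_succ.
have halve : 2 ^ n = 2 * 2 ^ n.-1 by rewrite -expnS.
move: weights total; rewrite halve middle alternating /n; nia.
Qed.

Theorem lemma8 (T : nat) (hT : 0 < T) (h4 : 4 %| T) :
  \sum_(1 <= t < (T %/ 4).+1) (T - 4 * (t - 1)) * 'C(T.+1, (2 * t).-1)
  = 2 ^ (T - 1) + (T %/ 2) * 'C(T, T %/ 2).
Proof.
case/dvdnP: h4 hT => m ->; rewrite [m * 4]mulnC muln_gt0 => /andP[_ m_gt0].
have half : 4 * m %/ 2 = 2 * m by rewrite -[4]/(2 * 2) -mulnA mulKn.
rewrite mulKn // half (big_addn 0 _ 1) !subn1 /= big_mkord.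
rewrite -sum_weighted_odd_bin //; apply: eq_bigr => s _.
rewrite addnK; congr (_ * 'C(_, _)); lia.
Qed.
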